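(* Let $T$ be a rooted binary tree with black/white-coloured leaves and the induced node colouring and classification as described in the context, and suppose $T$ contains more than one maximal black subtree. Then no SPR operation on $T$ belonging to the class $(\mathrm{W},\mathrm{b},\mathrm{B},\ast)$, $(\mathrm{W},\mathrm{b},\mathrm{W},\ast)$ or $(\mathrm{W},\mathrm{b},\mathrm{G},\ast)$ produces a compatible tree.
   Context: All trees are rooted binary trees; every non-leaf node has exactly two children and every non-root node $n$ has a parent $\mathrm{pa}(n)$. A ''subtree'' always means a node together with all of its descendants. Colouring: each leaf is coloured black (B) or white (W); an internal node is black if both children are black, white if both children are white, and grey (G) otherwise. A subtree is black (resp. white) if all its nodes are black (resp. white); it is maximal if no strictly larger subtree containing it is black (resp. white). Classification: a black or white node is of type ''r'' if it is the root of a maximal subtree of its own colour, and of type ''b'' otherwise; all grey nodes are of type ''b'' by convention. A tree is compatible if it contains at most one maximal black subtree. SPR operation $(u,v)$ on $T$: $u$ is a non-root node, $v$ is a node with $v\notin\{u,\mathrm{pa}(u)\}$ and $v$ not a descendant of $u$; the subtree rooted at $u$ is pruned (the edge to $u$ is removed and $\mathrm{pa}(u)$ deleted, its other child taking its place), then regrafted by inserting a new node on the edge from $v$ to its parent (or as a new root above $v$ if $v$ is the root) whose two children are $v$ and $u$; colours of the resulting tree are recomputed by the same rule. The operation belongs to class $(x,y,z,w)$ where $x,z\in\{\mathrm{B},\mathrm{W},\mathrm{G}\}$ are the colours in $T$ of $u$ and $v$, and $y,w\in\{\mathrm{r},\mathrm{b}\}$ their classifications in $T$; $\ast$ denotes any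 value. *)

From mathcomp Require Import all_boot.
Set Implicit Arguments. Unset Strict Implicit. Unset Printing Implicit Defensive.

Inductive colour := B | W | G.

(* Rooted binary trees; leaves carry a colour bit (true = black, false = white). *)
Inductive tree := Leaf of bool | Node of tree & tree.

Fixpoint colour_of (t : tree) : colour :=
  match t with
  | Leaf true => B
  | Leaf false => W
  | Node l r =>
      match colour_of l, colour_of r with
      | B, B => B
      | W, W => W
      | _, _ => G
      end
  end.

(* Nodes are addressed by paths from the root (false = left, true = right).
   subtree t p = the subtree rooted at node p, if p is a node of t. *)
Fixpoint subtree (t : tree) (p : seq bool) : option tree :=
  match p with
  | [::] => Some t
  | b :: p' => match t with
               | Leaf _ => None
               | Node l r => subtree (if b then r else l) p'
               end
  end.

Definition is_node (t : tree) (p : seq bool) : Prop := subtree t p <> None.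

Definition node_colour (t : tree) (p : seq bool) : option colour :=
  omap colour_of (subtree t p).

Fixpoint all_nodes_col (c : colour) (t : tree) : Prop :=
  colour_of t = c /\
  match t with
  | Leaf _ => True
  | Node l r => all_nodes_col c l /\ all_nodes_col c r
  end.

Definition mono_subtree (t : tree) (p : seq bool) (c : colour) : Prop :=
  exists s, subtree t p = Some s /\ all_nodes_col c s.

(* maximal: no strictly larger subtree containing it (= subtree rooted at a
   proper ancestor) has the same colour property *)
Definition maximal_mono (t : tree) (p : seq bool) (c : colour) : Prop :=
  mono_subtree t p c /\
  forall q, prefix q p -> q <> p -> ~ mono_subtree t q c.

(* classification "r"; every other node (incl. grey) is of type "b" *)
Definition type_r (t : tree) (p : seq bool) : Prop :=
  (node_colour t p = Some B /\ maximal_mono t p B) \/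
  (node_colour t p = Some W /\ maximal_mono t p W).

Definition type_b (t : tree) (p : seq bool) : Prop := is_node t p /\ ~ type_r t p.

Definition compatible (t : tree) : Prop :=
  forall p q, maximal_mono t p B -> maximal_mono t q B -> p = q.

Definition parent (u : seq bool) : seq bool := take (size u).-1 u.

(* remove the subtree at u (u non-root); pa(u) is replaced by the sibling *)
Fixpoint prune (t : tree) (u : seq bool) : tree :=
  match u with
  | [::] => t
  | b :: u' =>
      match t with
      | Leaf _ => t
      | Node l r =>
          if u' is [::] then (if b then l else r)
          else if b then Node l (prune r u') else Node (prune l u') r
      end
  end.

(* position, in the pruned tree, of a node v of t (v not in subtree of u,
   v <> pa(u)): nodes in the sibling's subtree move up one level *)
Definition remap (u v : seq bool) : seq bool :=
  let a := parent u in
  let b := last false u in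
  if prefix (rcons a (~~ b)) v then a ++ drop (size a).+1 v else v.

(* insert a new node on the edge above v (new root if v is the root),
   with children v and s *)
Fixpoint graft (t : tree) (v : seq bool) (s : tree) : tree :=
  match v with
  | [::] => Node t s
  | b :: v' =>
      match t with
      | Leaf _ => t
      | Node l r => if b then Node l (graft r v' s) else Node (graft l v' s) r
      end
  end.

Definition spr (t : tree) (u v : seq bool) : tree :=
  match subtree t u with
  | Some s => graft (prune t u) (remap u v) s
  | None => t
  end.

Definition spr_valid (t : tree) (u v : seq bool) : Prop :=
  [/\ is_node t u, u <> [::], is_node t v,
      v <> u /\ v <> parent u & ~ prefix u v].

From mathcomp Require Import all_boot.
Set Implicit Arguments. Unset Strict Implicit. Unset Printing Implicit Defensive.

(* Since [u] is white but not the root of a maximal white subtree,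
   its parent is white as well, so pruning [u] just replaces a white parent by
   its white sibling and leaves all maximal black subtrees intact.  Regrafting
   a white subtree may split a maximal black subtree but never merges two of
   them.  Hence the resulting tree still has at least two maximal black
   subtrees, whatever the class of [v]. *)

Lemma colour_of_children l r c :
  c <> G -> colour_of (Node l r) = c -> colour_of l = c /\ colour_of r = c.
Proof. by rewrite /=; case: (colour_of l); case: (colour_of r); case: c. Qed.

Lemma colour_of_subtree c t p s :
  c <> G -> colour_of t = c -> subtree t p = Some s -> colour_of s = c.
Proof.
move=> c_not_G; elim: p t => [|b p IHp] [b'|l r] //= t_c;
  [by case=> <- | by case=> <- |].
by have [l_c r_c] := colour_of_children c_not_G t_c; case: b; apply: IHp.
Qed.

Lemma all_nodes_colE c t : all_nodes_col c t <-> colour_of t = c /\ c <> G.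
Proof.
elim: t => [b|l IHl r IHr]; first by case: b; split=> [[<-]|[<-]].
split=> [[t_c [/IHl [_ c_not_G] _]] //|[t_c c_not_G]].
have [l_c r_c] := colour_of_children c_not_G t_c.
by split; last split; [| apply/IHl | apply/IHr].
Qed.

Lemma subtree_nil t : subtree t [::] = Some t.
Proof. by case: t. Qed.

Lemma subtree_cat t p q :
  subtree t (p ++ q) = obind (subtree^~ q) (subtree t p).
Proof. by elim: p t => [|b p IHp] [b'|l r] //=. Qed.

Lemma mono_subtreeE c t p :
  mono_subtree t p c <-> node_colour t p = Some c /\ c <> G.
Proof.
rewrite /mono_subtree /node_colour; case: (subtree t p) => [s|] /=.
  split=> [[_ [[<-] /all_nodes_colE [-> c_not_G]]] //|[[s_c] c_not_G]].
  by exists s; split; last apply/all_nodes_colE.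
by split=> [[s []]|[]].
Qed.

Lemma mono_subtree_nil c t : mono_subtree t [::] c <-> colour_of t = c /\ c <> G.
Proof.
rewrite /mono_subtree subtree_nil; split=> [[_ [[<-] /all_nodes_colE]] //|t_c].
by exists t; split; last apply/all_nodes_colE.
Qed.

Lemma is_node_prefix t p q : prefix p q -> is_node t q -> is_node t p.
Proof.
by case/prefixP=> r ->; rewrite /is_node subtree_cat; case: (subtree t p).
Qed.

Lemma node_colour_prefix c t p q :
  c <> G -> prefix p q -> is_node t q ->
  node_colour t p = Some c -> node_colour t q = Some c.
Proof.
move=> c_not_G /prefixP [r ->]; rewrite /is_node /node_colour subtree_cat.
case: (subtree t p) => [s|] //=; case sr: (subtree s r) => [s'|] //= _ [s_c].
by rewrite (colour_of_subtree c_not_G s_c sr).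
Qed.

Lemma prefix_parent q u : prefix q u -> q <> u -> prefix q (parent u).
Proof.
move=> q_pre_u q_neq_u.
have lt_qu : size q < size u.
  rewrite ltn_neqAle (size_prefix q_pre_u) andbT; apply/eqP=> size_qu.
  by apply: q_neq_u; move: q_pre_u; rewrite prefixE size_qu take_size => /eqP.
have u_gt0 : 0 < size u by apply: leq_ltn_trans lt_qu.
by rewrite /parent prefixE take_takel -?prefixE // -ltnS prednK.
Qed.

Lemma parent_cons b u : u <> [::] -> parent (b :: u) = b :: parent u.
Proof. by case: u. Qed.

Lemma type_b_white_parent t u :
  u <> [::] -> node_colour t u = Some W -> type_b t u ->
  node_colour t (parent u) = Some W.
Proof.
move=> u_nonroot u_W [u_node not_type_r].
have white_ancestor q : prefix q u -> q <> u -> mono_subtree t q W ->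
    node_colour t (parent u) = Some W.
  move=> q_pre_u q_neq_u q_mono.
  have [q_W _] := (mono_subtreeE _ _ _).1 q_mono.
  apply: node_colour_prefix q_W => //; first exact: prefix_parent.
  exact: is_node_prefix (prefix_take _ _) u_node.
have u_mono : mono_subtree t u W by apply/mono_subtreeE.
case parent_c: (node_colour t (parent u)) => [[]|] //; exfalso;
  apply: not_type_r; right; do 2!split=> //;
  by move=> q q_pre_u q_neq_u /(white_ancestor q q_pre_u q_neq_u); rewrite parent_c.
Qed.

Fixpoint black_roots (t : tree) : seq (seq bool) :=
  if colour_of t is B then [:: [::]] else
  if t is Node l r then
    map (cons false) (black_roots l) ++ map (cons true) (black_roots r)
  else [::].

Lemma black_roots_Node l r :
  black_roots (Node l r) =
  if colour_of (Node l r) is B then [:: [::]]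
  else map (cons false) (black_roots l) ++ map (cons true) (black_roots r).
Proof. by []. Qed.

Lemma black_rootsB t : colour_of t = B -> black_roots t = [:: [::]].
Proof. by case: t => [[]|l r] // t_B; rewrite black_roots_Node t_B. Qed.

Lemma black_rootsW t : colour_of t = W -> black_roots t = [::].
Proof.
elim: t => [[]|l IHl r IHr] // t_W.
have [//|l_W r_W] := colour_of_children _ t_W.
by rewrite black_roots_Node t_W IHl ?IHr.
Qed.

Lemma size_black_roots_Node l r :
  size (black_roots (Node l r)) =
  if colour_of (Node l r) is B then 1 else size (black_roots l) + size (black_roots r).
Proof.
by rewrite black_roots_Node; case: (colour_of _); rewrite // size_cat !size_map.
Qed.

Lemma uniq_black_roots t : uniq (black_roots t).
Proof.
elim: t => [[]|l IHl r IHr] //; rewrite black_roots_Node; case: (colour_of _) => //.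
all: rewrite cat_uniq !map_inj_uniq ?IHl ?IHr ?andbT //; try by move=> ? ? [].
all: by apply/hasPn => _ /mapP [p _ ->]; apply/negP => /mapP [q _].
Qed.

Lemma maximal_monoB_nil t : maximal_mono t [::] B <-> colour_of t = B.
Proof.
split=> [[/mono_subtree_nil [] //]|t_B].
split=> [|q]; first exact/mono_subtree_nil.
by rewrite prefixs0 => /eqP.
Qed.

Lemma maximal_monoB_cons l r b p :
  maximal_mono (Node l r) (b :: p) B <->
  colour_of (Node l r) <> B /\ maximal_mono (if b then r else l) p B.
Proof.
split=> [[p_mono p_max]|[t_not_B [p_mono p_max]]].
  split=> [t_B|]; first by apply: (p_max [::]) => //; apply/mono_subtree_nil.
  split=> // q q_pre_p q_neq_p; apply: (p_max (b :: q)); last by case.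
  by rewrite prefix_cons eqxx.
split=> // -[_ _ /mono_subtree_nil [] //|b' q].
rewrite prefix_cons => /andP [/eqP -> q_pre_p] q_neq_p.
by apply: p_max q_pre_p _ => q_p; rewrite q_p in q_neq_p.
Qed.

Lemma mem_map_cons (T : eqType) (x y : T) p s :
  (x :: p \in map (cons y) s) = (x == y) && (p \in s).
Proof.
case: eqP => [->|x_neq_y]; first by rewrite mem_map // => ? ? [].
by apply/mapP => -[q _ [x_y _]].
Qed.

Lemma mem_black_roots t p : p \in black_roots t <-> maximal_mono t p B.
Proof.
elim: p t => [|b p IHp] t.
  apply: iff_trans (iff_sym (maximal_monoB_nil t)).
  case: t => [[]|l r]; rewrite ?black_roots_Node; [by []|by []|].
  by case: (colour_of _); rewrite ?mem_cat //; split=> // /orP [] /mapP [].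
case: t => [b'|l r]; first by split=> [|[[s []]]]; case: b'.
apply: iff_trans (iff_sym (maximal_monoB_cons _ _ _ _)).
rewrite black_roots_Node; case: (colour_of _); first by split=> // -[].
all: rewrite mem_cat !mem_map_cons; case: b => /=; rewrite ?orbF.
all: by split=> [/IHp|[_ /IHp]].
Qed.

Lemma compatibleP t : compatible t <-> size (black_roots t) <= 1.
Proof.
split=> [compatible_t|size_le1 p q /mem_black_roots p_in /mem_black_roots q_in].
  have := uniq_black_roots t; have := mem_black_roots t.
  case: (black_roots t) => [|p [|q s]] //= roots_max /andP [p_notin _].
  have p_max : maximal_mono t p B by apply/roots_max; rewrite mem_head.
  have q_max : maximal_mono t q B by apply/roots_max; rewrite inE mem_head orbT.
  by rewrite (compatible_t p q p_max q_max) mem_head in p_notin.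
move: size_le1 p_in q_in; case: (black_roots t) => [|x [|y s]] //= _.
by rewrite !inE => /eqP -> /eqP ->.
Qed.

(* The colour clause is what makes [black_le] a congruence for [Node]. *)
Definition black_le (t t' : tree) : Prop :=
  (colour_of t' = B -> colour_of t = B) /\
  size (black_roots t) <= size (black_roots t').

Lemma black_le_refl t : black_le t t.
Proof. by []. Qed.

Lemma black_le_trans t1 t2 t3 : black_le t1 t2 -> black_le t2 t3 -> black_le t1 t3.
Proof.
by move=> [B21 le12] [B32 le23]; split=> [/B32/B21|] //; apply: leq_trans le23.
Qed.

Lemma black_le_white t t' : colour_of t = W -> colour_of t' = W -> black_le t t'.
Proof. by move=> t_W t'_W; split; rewrite ?t'_W // black_rootsW. Qed.

Lemma black_le_Node l l' r r' :
  black_le l l' -> black_le r r' -> black_le (Node l r) (Node l' r').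
Proof.
move=> [lB le_l] [rB le_r].
have tB : colour_of (Node l' r') = B -> colour_of (Node l r) = B.
  by case/(colour_of_children _) => [//| /lB l_B /rB r_B]; rewrite /= l_B r_B.
split=> //; rewrite !size_black_roots_Node.
case t'_c: (colour_of (Node l' r')); first by rewrite tB.
all: case t_c: (colour_of (Node l r)); try exact: leq_add.
all: have [//|l_B _] := colour_of_children _ t_c.
all: by rewrite (black_rootsB l_B) in le_l; apply: leq_trans le_l (leq_addr _ _).
Qed.

Lemma black_le_Node_white t s : colour_of s = W -> black_le t (Node t s).
Proof.
move=> s_W; have t_not_B : colour_of (Node t s) <> B.
  by case/(colour_of_children _) => // _; rewrite s_W.
split=> //; rewrite size_black_roots_Node (black_rootsW s_W) addn0.
by case: (colour_of _) t_not_B.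
Qed.

Lemma black_le_graft t v s : colour_of s = W -> black_le t (graft t v s).
Proof.
move=> s_W; elim: v t => [|b v IHv] [b'|l r]; try exact: black_le_Node_white.
  exact: black_le_refl.
by case: b; apply: black_le_Node; try exact: black_le_refl; apply: IHv.
Qed.

Lemma black_le_prune t u :
  u <> [::] -> node_colour t (parent u) = Some W -> black_le t (prune t u).
Proof.
elim: u t => [|b u IHu] // [b'|l r] _ parent_W; first exact: black_le_refl.
case: u IHu parent_W => [|b'' u] IHu parent_W.
  have [t_W] : Some (colour_of (Node l r)) = Some W := parent_W.
  have [//|l_W r_W] := colour_of_children _ t_W.
  by case: b {parent_W}; apply: black_le_white.
rewrite parent_cons // in parent_W.
by case: b parent_W => parent_W;
  apply: black_le_Node; try exact: black_le_refl; apply: IHu.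
Qed.

Theorem lemma4 (t : tree) :
  (exists p q, p <> q /\ maximal_mono t p B /\ maximal_mono t q B) ->
  forall u v : seq bool,
    spr_valid t u v ->
    node_colour t u = Some W -> type_b t u ->
    (node_colour t v = Some B \/ node_colour t v = Some W \/
     node_colour t v = Some G) ->
    ~ compatible (spr t u v).
Proof.
move=> [p [q [p_neq_q [p_max q_max]]]] u v [u_node u_nonroot _ _ _] u_W u_type_b _.
have two_black_roots : 1 < size (black_roots t).
  rewrite ltnNge; apply/negP => /compatibleP compatible_t.
  exact: p_neq_q (compatible_t p q p_max q_max).
rewrite /spr; case u_sub: (subtree t u) => [s|]; last by case: u_node.
have s_W : colour_of s = W by move: u_W; rewrite /node_colour u_sub => -[].
have parent_W := type_b_white_parent u_nonroot u_W u_type_b.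
have [_ le_spr] := black_le_trans (black_le_prune u_nonroot parent_W)
  (black_le_graft (prune t u) (remap u v) s_W).
by move/compatibleP; rewrite leqNgt (leq_trans two_black_roots le_spr).
Qed.
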